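(* Let $0<q<1$ and let $r,f,g,v,w,u,x$ be complex parameters with $\max\{|xs|,|xu|\}<1$. Then, with the operators acting on the variable $s$, $$\mathbb{T}(r,f,g,v,w,uD_s)\left\{\frac{1}{(xs;q)_\infty}\right\}=\frac{1}{(xs;q)_\infty}\;{}_3\Phi_2\left[\begin{matrix}r,f,g;\\ v,w;\end{matrix}\;q;\,xu\right]$$ and $$\mathbb{E}(r,f,g,v,w,-u\theta_s)\left\{(xs;q)_\infty\right\}=(xs;q)_\infty\;{}_3\Phi_3\left[\begin{matrix}r,f,g;\\ v,w,0;\end{matrix}\;q;\,xu\right].$$
   Context: Throughout $0<q<1$. For complex $\alpha$: $(\alpha;q)_0=1$, $(\alpha;q)_n=\prod_{k=0}^{n-1}(1-\alpha q^k)$, $(\alpha;q)_\infty=\prod_{k=0}^\infty(1-\alpha q^k)$, and $(\alpha_1,\dots,\alpha_m;q)_n=(\alpha_1;q)_n\cdots(\alpha_m;q)_n$. The basic hypergeometric series is ${}_{\mathfrak r}\Phi_{\mathfrak s}\left[\begin{matrix}a_1,\dots,a_{\mathfrak r};\\ b_1,\dots,b_{\mathfrak s};\end{matrix}\,q;z\right]=\sum_{n=0}^\infty\big[(-1)^nq^{\binom n2}\big]^{1+\mathfrak s-\mathfrak r}\frac{(a_1,\dots,a_{\mathfrak r};q)_n}{(b_1,\dots,b_{\mathfrak s};q)_n}\frac{z^n}{(q;q)_n}$. The $q$-difference operators acting on functions of $s$ are $D_s\{F(s)\}=\frac{F(s)-F(qs)}{s}$ and $\theta_s\{F(s)\}=\frac{F(q^{-1}s)-F(s)}{q^{-1}s}$,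 with $D_s^0,\theta_s^0$ the identity. For a parameter $y$, $\mathbb{T}(r,f,g,v,w,yD_s)=\sum_{n=0}^\infty\frac{(r,f,g;q)_n}{(q,v,w;q)_n}(yD_s)^n$ and $\mathbb{E}(r,f,g,v,w,y\theta_s)=\sum_{n=0}^\infty\frac{(-1)^nq^{\binom n2}(r,f,g;q)_n}{(q,v,w;q)_n}(y\theta_s)^n$ (here $y=u$ resp. $y=-u$), applied termwise. *)

From Stdlib Require Import Reals List.
From Coquelicot Require Import Coquelicot.
Open Scope C_scope.

Fixpoint qpoch (a : C) (q : R) (n : nat) : C :=
  match n with
  | O => 1
  | S m => qpoch a q m * (1 - a * RtoC (q ^ m))
  end.

Definition qpochs (l : list C) (q : R) (n : nat) : C :=
  fold_right (fun a acc => qpoch a q n * acc) 1 l.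

Definition CLim (u : nat -> C) : C :=
  (real (Lim_seq (fun n => Re (u n))), real (Lim_seq (fun n => Im (u n)))).

Definition qpinf (a : C) (q : R) : C := CLim (qpoch a q).

Definition binom2 (n : nat) : nat := (n * (n - 1) / 2)%nat.

Definition bhs_term (a b : list C) (q : R) (z : C) (n : nat) : C :=
  ((- 1) ^ n * RtoC (q ^ binom2 n)) ^ (1 + length b - length a)
  * qpochs a q n / qpochs b q n * z ^ n / qpoch (RtoC q) q n.

Definition bhs (a b : list C) (q : R) (z : C) : C :=
  CLim (sum_n (bhs_term a b q z)).

Definition Dq (q : R) (F : C -> C) : C -> C :=
  fun s => (F s - F (RtoC q * s)) / s.
Definition thetaq (q : R) (F : C -> C) : C -> C :=
  fun s => (F (/ RtoC q * s) - F s) / (/ RtoC q * s).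

Definition T_term (q : R) (r f g v w y : C) (F : C -> C) (s : C) (n : nat) : C :=
  qpochs (r :: f :: g :: nil) q n / qpochs (RtoC q :: v :: w :: nil) q n
  * Nat.iter n (fun G => fun t => y * Dq q G t) F s.

Definition E_term (q : R) (r f g v w y : C) (F : C -> C) (s : C) (n : nat) : C :=
  (- 1) ^ n * RtoC (q ^ binom2 n)
  * qpochs (r :: f :: g :: nil) q n / qpochs (RtoC q :: v :: w :: nil) q n
  * Nat.iter n (fun G => fun t => y * thetaq q G t) F s.

From Stdlib Require Import Reals List Lia Lra.
From Coquelicot Require Import Coquelicot.
Open Scope C_scope.

(* Both identities are eigenfunction computations. The functional equation
   (a;q)_oo = (1 - a) (aq;q)_oo gives D_s (1/(xs;q)_oo) = x/(xs;q)_oo and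
   theta_s (xs;q)_oo = -x (xs;q)_oo, so the n-th term of each operator series is
   the n-th term of the 3Phi2 (resp. 3Phi3, whose extra lower parameter 0 only
   contributes the factor (-1)^n q^(n choose 2)) times the function itself.
   The analytic input: the partial products (a;q)_n converge, their limit is
   nonzero when |a| < 1 (this is what lets D_s divide by (xqs;q)_oo), and
   1/(b;q)_n is eventually bounded, so both series are dominated by a geometric
   series in |xu|. *)

Lemma CLim_correct (u : nat -> C) (l : C) :
  filterlim u eventually (locally l) -> CLim u = l.
Proof.
  intros Hu.
  assert (Hre : is_lim_seq (fun n => Re (u n)) (Re l)).
  { apply filterlim_locally; intros eps.
    destruct (proj1 (filterlim_locally u l) Hu eps) as [N HN].
    exists N; intros n Hn; apply (HN n Hn). }
  assert (Him : is_lim_seq (fun n => Im (u n)) (Im l)).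
  { apply filterlim_locally; intros eps.
    destruct (proj1 (filterlim_locally u l) Hu eps) as [N HN].
    exists N; intros n Hn; apply (HN n Hn). }
  unfold CLim; rewrite (is_lim_seq_unique _ _ Hre), (is_lim_seq_unique _ _ Him).
  now destruct l.
Qed.

Lemma filterlim_shift_n {T : Type} (F : (T -> Prop) -> Prop) (u : nat -> T) m :
  filterlim (fun n => u (m + n)%nat) eventually F -> filterlim u eventually F.
Proof.
  intros Hu P HP; destruct (Hu P HP) as [N HN]; exists (m + N)%nat; intros n Hn.
  replace n with (m + (n - m))%nat by lia; apply HN; lia.
Qed.

Lemma ex_series_le_eventually {K : AbsRing} {V : CompleteNormedModule K}
    (a : nat -> V) (b : nat -> R) N :
  (forall n, (N <= n)%nat -> norm (a n) <= b n)%R -> ex_series b -> ex_series a.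
Proof.
  intros Hab Hb; apply (ex_series_incr_n a N).
  apply (ex_series_le _ (fun n => b (N + n)%nat)).
  - intros n; apply Hab; lia.
  - now apply ex_series_incr_n.
Qed.

Lemma exists_pow_lt (q A e : R) : (0 < q < 1)%R -> (0 <= A)%R -> (0 < e)%R ->
  exists K, (A * q ^ K < e)%R.
Proof.
  intros Hq HA He.
  assert (Hq1 : (Rabs q < 1)%R) by (rewrite Rabs_pos_eq; lra).
  assert (Hy : (0 < e / (A + 1))%R) by (apply Rdiv_lt_0_compat; lra).
  destruct (pow_lt_1_zero q Hq1 _ Hy) as [K HK]; exists K.
  specialize (HK K (le_n K)); rewrite Rabs_pos_eq in HK by (apply pow_le; lra).
  assert (HAK : ((A + 1) * q ^ K < (A + 1) * (e / (A + 1)))%R)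
    by (apply Rmult_lt_compat_l; lra).
  replace ((A + 1) * (e / (A + 1)))%R with e in HAK by (field; lra).
  assert (0 <= q ^ K)%R by (apply pow_le; lra); nra.
Qed.

Lemma pow_le_1 (q : R) n : (0 <= q <= 1)%R -> (0 <= q ^ n <= 1)%R.
Proof. intros Hq; induction n as [|n IH]; simpl; nra. Qed.

Lemma Cinv_0 : / (0 : C) = 0.
Proof. apply injective_projections; simpl; unfold Rdiv; ring. Qed.

Lemma Cinv_mult (a b : C) : / (a * b) = / a * / b.
Proof.
  destruct (Req_dec (Cmod a) 0) as [Ha|Ha].
  { apply Cmod_eq_0 in Ha; subst; rewrite Cmult_0_l, Cinv_0; ring. }
  destruct (Req_dec (Cmod b) 0) as [Hb|Hb].
  { apply Cmod_eq_0 in Hb; subst; rewrite Cmult_0_r, Cinv_0; ring. }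
  field; split; intros E; subst; rewrite Cmod_0 in *; congruence.
Qed.

Lemma Cmod_inv_le_2 (z : C) : (/ 2 <= Cmod z)%R -> (Cmod (/ z) <= 2)%R.
Proof.
  intros Hz; rewrite Cmod_inv.
  - rewrite <- (Rinv_inv 2); apply Rinv_le_contravar; lra.
  - intros E; rewrite E, Cmod_0 in Hz; lra.
Qed.

Lemma Cmod_one_minus_ge (a : C) (t : R) : (0 <= t)%R ->
  (1 - Cmod a * t <= Cmod (1 - a * RtoC t))%R.
Proof.
  intros Ht.
  assert (H := Cmod_triangle (1 - a * RtoC t) (a * RtoC t)).
  replace (1 - a * RtoC t + a * RtoC t) with (1 : C) in H by ring.
  rewrite Cmod_1, Cmod_mult, Cmod_R, Rabs_pos_eq in H; lra.
Qed.

Lemma Cmod_one_minus_le (a : C) (t : R) : (0 <= t)%R ->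
  (Cmod (1 - a * RtoC t) <= 1 + Cmod a * t)%R.
Proof.
  intros Ht; eapply Rle_trans; [apply Cmod_triangle|].
  rewrite Cmod_1, Cmod_opp, Cmod_mult, Cmod_R, Rabs_pos_eq; lra.
Qed.

Lemma qpoch_add (a : C) (q : R) m n :
  qpoch a q (m + n) = qpoch a q m * qpoch (a * RtoC (q ^ m)) q n.
Proof.
  induction n as [|n IH]; simpl.
  - rewrite Nat.add_0_r; ring.
  - rewrite Nat.add_succ_r; simpl; rewrite IH, pow_add, RtoC_mult; ring.
Qed.

Lemma qpoch_0 (q : R) n : qpoch 0 q n = 1.
Proof. induction n as [|n IH]; simpl; [|rewrite IH]; ring. Qed.

Lemma qpoch_neq_0 (a : C) (q : R) n : (0 < q < 1)%R -> (Cmod a < 1)%R ->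
  qpoch a q n <> 0.
Proof.
  intros Hq Ha; induction n as [|n IH]; simpl.
  - exact C1_nz.
  - apply Cmult_neq_0; [exact IH|]; intros E.
    assert (Hqn : (0 <= q ^ n <= 1)%R) by (apply pow_le_1; lra).
    assert (H := Cmod_one_minus_ge a (q ^ n) (proj1 Hqn)).
    rewrite E, Cmod_0 in H; assert (0 <= Cmod a)%R by apply Cmod_ge_0; nra.
Qed.

Section QPochhammerBounds.

Variables (q : R) (a : C).
Hypothesis Hq : (0 < q < 1)%R.

Let geom_partial n : (Cmod a * (1 - q ^ S n) / (1 - q)
  = Cmod a * (1 - q ^ n) / (1 - q) + Cmod a * q ^ n)%R.
Proof. simpl; field; lra. Qed.

Lemma Cmod_qpoch_le_exp n :
  (Cmod (qpoch a q n) <= exp (Cmod a * (1 - q ^ n) / (1 - q)))%R.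
Proof.
  induction n as [|n IH]; simpl qpoch.
  - rewrite Cmod_1; replace (Cmod a * (1 - q ^ 0) / (1 - q))%R with 0%R
      by (simpl; field; lra).
    rewrite exp_0; lra.
  - rewrite Cmod_mult, geom_partial, exp_plus.
    assert (Hqn : (0 <= q ^ n)%R) by (apply pow_le; lra).
    apply Rmult_le_compat; try apply Cmod_ge_0; [exact IH|].
    eapply Rle_trans; [apply Cmod_one_minus_le, Hqn | apply exp_ineq1_le].
Qed.

Lemma Cmod_qpoch_le n : (Cmod (qpoch a q n) <= exp (Cmod a / (1 - q)))%R.
Proof.
  eapply Rle_trans; [apply Cmod_qpoch_le_exp|].
  assert (Hqn := pow_le_1 q n ltac:(lra)); assert (Ha := Cmod_ge_0 a).
  assert (H : (Cmod a * (1 - q ^ n) / (1 - q) <= Cmod a / (1 - q))%R).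
  { unfold Rdiv; apply Rmult_le_compat_r; [apply Rlt_le, Rinv_0_lt_compat; lra | nra]. }
  destruct H as [H|H]; [now apply Rlt_le, exp_increasing | rewrite H; lra].
Qed.

Lemma Cmod_qpoch_ge_partial n :
  (1 - Cmod a * (1 - q ^ n) / (1 - q) <= Cmod (qpoch a q n))%R.
Proof.
  induction n as [|n IH]; simpl qpoch.
  - rewrite Cmod_1; simpl; unfold Rdiv; rewrite Rminus_diag, Rmult_0_r, Rmult_0_l; lra.
  - rewrite Cmod_mult, geom_partial.
    assert (Hqn := pow_le_1 q n ltac:(lra)); assert (Ha := Cmod_ge_0 a).
    assert (H1 := Cmod_one_minus_ge a (q ^ n) (proj1 Hqn)).
    assert (H2 := Cmod_ge_0 (1 - a * RtoC (q ^ n))).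
    assert (H3 := Cmod_ge_0 (qpoch a q n)).
    assert (HS : (0 <= Cmod a * (1 - q ^ n) / (1 - q))%R).
    { apply Rmult_le_pos; [nra | apply Rlt_le, Rinv_0_lt_compat; lra]. }
    set (S := (Cmod a * (1 - q ^ n) / (1 - q))%R) in *.
    set (t := (Cmod a * q ^ n)%R) in *.
    assert (Ht : (0 <= t)%R) by (unfold t; nra).
    assert (0 <= Cmod (qpoch a q n) * Cmod (1 - a * RtoC (q ^ n)))%R
      by (apply Rmult_le_pos; assumption).
    destruct (Rle_lt_dec t 1); [|lra].
    apply Rle_trans with ((1 - S) * (1 - t))%R; [nra|].
    destruct (Rle_lt_dec 0 (1 - S)); [apply Rmult_le_compat; lra|].
    assert ((1 - S) * (1 - t) <= 0)%R by nra; lra.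
Qed.

Lemma Cmod_qpoch_ge n : (1 - Cmod a / (1 - q) <= Cmod (qpoch a q n))%R.
Proof.
  eapply Rle_trans; [|apply Cmod_qpoch_ge_partial].
  assert (Hqn := pow_le_1 q n ltac:(lra)); assert (Ha := Cmod_ge_0 a).
  unfold Rdiv; apply Rplus_le_compat_l, Ropp_le_contravar.
  apply Rmult_le_compat_r; [apply Rlt_le, Rinv_0_lt_compat; lra | nra].
Qed.

End QPochhammerBounds.

Section InfiniteProduct.

Variable q : R.
Hypothesis Hq : (0 < q < 1)%R.

Lemma qpoch_cvg (a : C) : filterlim (qpoch a q) eventually (locally (qpinf a q)).
Proof.
  set (d k := match k with O => 1 | S k => qpoch a q (S k) - qpoch a q k end : C).
  assert (Hsum : forall n, sum_n d n = qpoch a q n).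
  { induction n as [|n IH]; [now rewrite sum_O|].
    rewrite sum_Sn, IH; change (qpoch a q n + (qpoch a q (S n) - qpoch a q n)
      = qpoch a q (S n)); ring. }
  set (M := exp (Cmod a / (1 - q))).
  assert (Hd : forall k, (norm (d (S k)) <= M * Cmod a * q ^ k)%R).
  { intros k; change (Cmod (qpoch a q (S k) - qpoch a q k) <= M * Cmod a * q ^ k)%R.
    replace (qpoch a q (S k) - qpoch a q k) with (- (qpoch a q k * (a * RtoC (q ^ k))))
      by (simpl; ring).
    rewrite Cmod_opp, !Cmod_mult, Cmod_R, Rabs_pos_eq, Rmult_assoc by (apply pow_le; lra).
    apply Rmult_le_compat_r; [apply Rmult_le_pos; [apply Cmod_ge_0 | apply pow_le; lra]|].
    apply Cmod_qpoch_le; exact Hq. }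
  assert (Hgeom : ex_series (fun k => M * Cmod a * q ^ k)%R).
  { eexists; apply (is_series_scal (K := R_AbsRing) (V := R_NormedModule)).
    apply is_series_geom; rewrite Rabs_pos_eq; lra. }
  destruct (proj2 (ex_series_incr_1 d) (ex_series_le _ _ Hd Hgeom)) as [l Hl].
  assert (Hlim : filterlim (qpoch a q) eventually (locally l)).
  { apply filterlim_ext with (sum_n d); [exact Hsum | exact Hl]. }
  unfold qpinf; rewrite (CLim_correct _ _ Hlim); exact Hlim.
Qed.

Lemma qpinf_split (a : C) m :
  qpinf a q = qpoch a q m * qpinf (a * RtoC (q ^ m)) q.
Proof.
  unfold qpinf at 1; apply CLim_correct, (filterlim_shift_n _ _ m).
  apply filterlim_ext with (fun n => qpoch a q m * qpoch (a * RtoC (q ^ m)) q n).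
  - intros n; symmetry; apply qpoch_add.
  - eapply filterlim_comp; [apply qpoch_cvg|].
    exact (filterlim_scal_r (K := C_AbsRing) (V := C_NormedModule) _ _).
Qed.

Lemma qpinf_shift (a : C) : qpinf a q = (1 - a) * qpinf (a * RtoC q) q.
Proof.
  rewrite (qpinf_split a 1), pow_1; f_equal; simpl; change (RtoC 1) with (1 : C); ring.
Qed.

Lemma Cmod_qpinf_ge (a : C) : (1 - Cmod a / (1 - q) <= Cmod (qpinf a q))%R.
Proof.
  refine (is_lim_seq_le (fun _ => 1 - Cmod a / (1 - q))%R (fun n => Cmod (qpoch a q n))
    (1 - Cmod a / (1 - q))%R (Cmod (qpinf a q)) _ _ _).
  - intros n; apply Cmod_qpoch_ge; exact Hq.
  - apply is_lim_seq_const.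
  - eapply filterlim_comp; [apply qpoch_cvg|].
    exact (filterlim_norm (K := C_AbsRing) (V := C_NormedModule) (qpinf a q)).
Qed.

(* Split off a finite product so that the remaining infinite product has a small parameter. *)
Lemma qpinf_neq_0 (a : C) : (Cmod a < 1)%R -> qpinf a q <> 0.
Proof.
  intros Ha.
  destruct (exists_pow_lt q (Cmod a) (1 - q) Hq (Cmod_ge_0 a) ltac:(lra)) as [K HK].
  rewrite (qpinf_split a K); apply Cmult_neq_0; [now apply qpoch_neq_0|].
  intros E; assert (H := Cmod_qpinf_ge (a * RtoC (q ^ K))).
  rewrite E, Cmod_0, Cmod_mult, Cmod_R, Rabs_pos_eq in H by (apply pow_le; lra).
  assert (Cmod a * q ^ K / (1 - q) < 1)%R; [|lra].
  apply Rmult_lt_reg_r with (1 - q)%R; [lra|].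
  unfold Rdiv; rewrite Rmult_assoc, Rinv_l; lra.
Qed.

End InfiniteProduct.

Lemma Cmod_sign_pow_le_1 (q : R) n m e : (0 <= q <= 1)%R ->
  (Cmod (((- 1) ^ n * RtoC (q ^ m)) ^ e) <= 1)%R.
Proof.
  intros Hq; assert (Hqm := pow_le_1 q m Hq).
  rewrite Cmod_pow, Cmod_mult, Cmod_pow, !Cmod_R, (Rabs_pos_eq (q ^ m)) by lra.
  replace (Rabs (-1)) with 1%R by (rewrite Rabs_left; lra).
  rewrite pow1, Rmult_1_l.
  apply pow_le_1; exact Hqm.
Qed.

Section HypergeometricSeries.

Variable q : R.
Hypothesis Hq : (0 < q < 1)%R.

Lemma Cmod_qpochs_le (a : list C) : exists M, forall n, (Cmod (qpochs a q n) <= M)%R.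
Proof.
  induction a as [|c a [M HM]].
  - exists 1%R; intros n; simpl; rewrite Cmod_1; lra.
  - exists (exp (Cmod c / (1 - q)) * M)%R; intros n; simpl; rewrite Cmod_mult.
    apply Rmult_le_compat; try apply Cmod_ge_0; [apply Cmod_qpoch_le; exact Hq | apply HM].
Qed.

(* Past an index K with |b| q^K <= (1 - q)/2, the factor (b q^K;q)_(n-K) of (b;q)_n
   has modulus at least 1/2. *)
Lemma Cmod_inv_qpoch_eventually_le (b : C) :
  exists B, eventually (fun n => Cmod (/ qpoch b q n) <= B)%R.
Proof.
  destruct (exists_pow_lt q (Cmod b) ((1 - q) / 2) Hq (Cmod_ge_0 b) ltac:(lra)) as [K HK].
  exists (Cmod (/ qpoch b q K) * 2)%R, K; intros n Hn.
  replace n with (K + (n - K))%nat by lia.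
  rewrite qpoch_add, Cinv_mult, Cmod_mult.
  apply Rmult_le_compat_l; [apply Cmod_ge_0|]; apply Cmod_inv_le_2.
  eapply Rle_trans; [|apply Cmod_qpoch_ge; exact Hq].
  rewrite Cmod_mult, Cmod_R, Rabs_pos_eq by (apply pow_le; lra).
  assert (Cmod b * q ^ K / (1 - q) <= / 2)%R; [|lra].
  apply Rmult_le_reg_r with (1 - q)%R; [lra|].
  unfold Rdiv; rewrite Rmult_assoc, Rinv_l; lra.
Qed.

Lemma Cmod_inv_qpochs_eventually_le (b : list C) :
  exists B, eventually (fun n => Cmod (/ qpochs b q n) <= B)%R.
Proof.
  induction b as [|c b [B HB]].
  - exists (Cmod (/ 1)); apply filter_forall; intros n; apply Rle_refl.
  - destruct (Cmod_inv_qpoch_eventually_le c) as [Bc HBc]; exists (Bc * B)%R.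
    eapply filter_imp; [|exact (filter_and _ _ HBc HB)]; intros n [Hc Hb]; change (qpochs (c :: b) q n) with (qpoch c q n * qpochs b q n).
    rewrite Cinv_mult, Cmod_mult; apply Rmult_le_compat; try apply Cmod_ge_0; assumption.
Qed.

Lemma is_series_bhs (a b : list C) (z : C) : (Cmod z < 1)%R ->
  is_series (bhs_term a b q z) (bhs a b q z).
Proof.
  intros Hz.
  destruct (Cmod_qpochs_le a) as [M HM].
  destruct (Cmod_inv_qpochs_eventually_le (RtoC q :: b)) as [B [N HB]].
  assert (Hex : ex_series (bhs_term a b q z)).
  { apply (ex_series_le_eventually (K := C_AbsRing) (V := C_CompleteNormedModule)
      _ (fun n => M * B * Cmod z ^ n)%R N).
    - intros n Hn; change (norm (bhs_term a b q z n)) with (Cmod (bhs_term a b q z n)).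
      replace (bhs_term a b q z n) with
        (((- 1) ^ n * RtoC (q ^ binom2 n)) ^ (1 + length b - length a) * qpochs a q n
         * z ^ n * / qpochs (RtoC q :: b) q n).
      2:{ change (qpochs (RtoC q :: b) q n) with (qpoch (RtoC q) q n * qpochs b q n).
          unfold bhs_term, Cdiv; rewrite Cinv_mult; ring. }
      replace (M * B * Cmod z ^ n)%R with (M * Cmod z ^ n * B)%R by ring.
      rewrite Cmod_mult; apply Rmult_le_compat; try apply Cmod_ge_0; [|apply HB, Hn].
      rewrite Cmod_mult, Cmod_pow.
      apply Rmult_le_compat_r; [apply pow_le, Cmod_ge_0|].
      rewrite Cmod_mult, <- (Rmult_1_l M).
      apply Rmult_le_compat; try apply Cmod_ge_0; [|apply HM].
      apply Cmod_sign_pow_le_1; lra.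
    - eexists; apply (is_series_scal (K := R_AbsRing) (V := R_NormedModule)).
      apply is_series_geom; rewrite Rabs_pos_eq; [exact Hz | apply Cmod_ge_0]. }
  destruct Hex as [l Hl].
  replace (bhs a b q z) with l; [exact Hl|]; symmetry; apply CLim_correct, Hl.
Qed.

End HypergeometricSeries.

Section Eigenfunctions.

Variable q : R.

Lemma iter_Dq_eigen (y c : C) (F : C -> C) (P : C -> Prop) :
  (forall t, P t -> P (RtoC q * t)) -> (forall t, P t -> Dq q F t = c * F t) ->
  forall n t, P t -> Nat.iter n (fun G t => y * Dq q G t) F t = (y * c) ^ n * F t.
Proof.
  intros HP HF n; induction n as [|n IH]; intros t Ht; simpl.
  - ring.
  - transitivity (y * (y * c) ^ n * Dq q F t).
    + unfold Dq at 1 3; rewrite (IH t Ht), (IH _ (HP t Ht)); unfold Cdiv; ring.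
    + rewrite (HF t Ht); ring.
Qed.

Lemma iter_thetaq_eigen (y c : C) (F : C -> C) (P : C -> Prop) :
  (forall t, P t -> P (/ RtoC q * t)) -> (forall t, P t -> thetaq q F t = c * F t) ->
  forall n t, P t -> Nat.iter n (fun G t => y * thetaq q G t) F t = (y * c) ^ n * F t.
Proof.
  intros HP HF n; induction n as [|n IH]; intros t Ht; simpl.
  - ring.
  - transitivity (y * (y * c) ^ n * thetaq q F t).
    + unfold thetaq at 1 3; rewrite (IH t Ht), (IH _ (HP t Ht)); unfold Cdiv; ring.
    + rewrite (HF t Ht); ring.
Qed.

Hypothesis Hq : (0 < q < 1)%R.

Lemma RtoC_q_neq_0 : RtoC q <> 0.
Proof. intros E; apply RtoC_inj in E; lra. Qed.

Lemma Cmod_mult_q_lt_1 (x t : C) :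
  (Cmod (x * t) < 1)%R -> (Cmod (x * (RtoC q * t)) < 1)%R.
Proof.
  intros Hxt; replace (x * (RtoC q * t)) with (RtoC q * (x * t)) by ring.
  rewrite Cmod_mult, Cmod_R, Rabs_pos_eq by lra.
  assert (H := Cmod_ge_0 (x * t)); nra.
Qed.

Lemma Dq_inv_qpinf (x t : C) : t <> 0 -> (Cmod (x * t) < 1)%R ->
  Dq q (fun t => / qpinf (x * t) q) t = x * / qpinf (x * t) q.
Proof.
  intros Ht Hxt; unfold Dq.
  assert (Hxqt := Cmod_mult_q_lt_1 x t Hxt).
  assert (H1 : 1 - x * t <> 0).
  { intros E; assert (Hx1 : x * t = 1).
    { transitivity (1 - (1 - x * t)); [ring | rewrite E; ring]. }
    rewrite Hx1, Cmod_1 in Hxt; lra. }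
  assert (H2 := qpinf_neq_0 q Hq _ Hxqt).
  rewrite (qpinf_shift q Hq (x * t)).
  replace (x * t * RtoC q) with (x * (RtoC q * t)) by ring.
  field; auto.
Qed.

Lemma thetaq_qpinf (x t : C) : t <> 0 ->
  thetaq q (fun t => qpinf (x * t) q) t = - x * qpinf (x * t) q.
Proof.
  intros Ht; unfold thetaq.
  rewrite (qpinf_shift q Hq (x * (/ RtoC q * t))).
  replace (x * (/ RtoC q * t) * RtoC q) with (x * t) by (field; exact RtoC_q_neq_0).
  field; split; [exact RtoC_q_neq_0 | exact Ht].
Qed.

End Eigenfunctions.

Lemma T_term_inv_qpinf (q : R) (r f g v w u x s : C) n :
  (0 < q < 1)%R -> s <> 0 -> (Cmod (x * s) < 1)%R ->
  T_term q r f g v w u (fun t => / qpinf (x * t) q) s n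
  = / qpinf (x * s) q * bhs_term (r :: f :: g :: nil) (v :: w :: nil) q (x * u) n.
Proof.
  intros Hq Hs Hxs; unfold T_term, bhs_term.
  rewrite (iter_Dq_eigen q u x _ (fun t => t <> 0 /\ Cmod (x * t) < 1)%R).
  - change (qpochs (RtoC q :: v :: w :: nil) q n)
      with (qpoch (RtoC q) q n * qpochs (v :: w :: nil) q n).
    unfold Cdiv; rewrite Cinv_mult, (Cmult_comm u x); cbn [length Nat.add Nat.sub Cpow]; ring.
  - intros t [Ht Hxt]; split.
    + apply Cmult_neq_0; [apply RtoC_q_neq_0, Hq | exact Ht].
    + now apply Cmod_mult_q_lt_1.
  - intros t [Ht Hxt]; now apply Dq_inv_qpinf.
  - now split.
Qed.

Lemma E_term_qpinf (q : R) (r f g v w u x s : C) n :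
  (0 < q < 1)%R -> s <> 0 ->
  E_term q r f g v w (- u) (fun t => qpinf (x * t) q) s n
  = qpinf (x * s) q * bhs_term (r :: f :: g :: nil) (v :: w :: RtoC 0 :: nil) q (x * u) n.
Proof.
  intros Hq Hs; unfold E_term, bhs_term.
  rewrite (iter_thetaq_eigen q (- u) (- x) _ (fun t => t <> 0)).
  - change (qpochs (RtoC q :: v :: w :: nil) q n)
      with (qpoch (RtoC q) q n * qpochs (v :: w :: nil) q n).
    replace (qpochs (v :: w :: RtoC 0 :: nil) q n) with (qpochs (v :: w :: nil) q n)
      by (unfold qpochs; simpl; rewrite qpoch_0; ring).
    unfold Cdiv; rewrite Cinv_mult.
    replace (- u * - x) with (x * u) by ring; cbn [length Nat.add Nat.sub Cpow]; ring.
  - intros t Ht E; apply Ht.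
    transitivity (RtoC q * (/ RtoC q * t)); [field; apply RtoC_q_neq_0, Hq | rewrite E; ring].
  - intros t Ht; now apply thetaq_qpinf.
  - exact Hs.
Qed.

Theorem corollary1 (q : R) (r f g v w u x s : C) :
  (0 < q < 1)%R ->
  s <> 0 ->
  (Cmod (x * s) < 1)%R -> (Cmod (x * u) < 1)%R ->
  (* the infinite product (xs;q)_oo converges *)
  filterlim (qpoch (x * s) q) eventually (locally (qpinf (x * s) q)) /\
  (* the 3Phi2 and 3Phi3 series converge *)
  is_series (bhs_term (r :: f :: g :: nil) (v :: w :: nil) q (x * u))
    (bhs (r :: f :: g :: nil) (v :: w :: nil) q (x * u)) /\
  is_series (bhs_term (r :: f :: g :: nil) (v :: w :: RtoC 0 :: nil) q (x * u))
    (bhs (r :: f :: g :: nil) (v :: w :: RtoC 0 :: nil) q (x * u)) /\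
  (* first identity *)
  is_series (T_term q r f g v w u (fun t => / qpinf (x * t) q) s)
    (/ qpinf (x * s) q * bhs (r :: f :: g :: nil) (v :: w :: nil) q (x * u)) /\
  (* second identity *)
  is_series (E_term q r f g v w (- u) (fun t => qpinf (x * t) q) s)
    (qpinf (x * s) q * bhs (r :: f :: g :: nil) (v :: w :: RtoC 0 :: nil) q (x * u)).
Proof.
  intros Hq Hs Hxs Hxu.
  assert (H32 := is_series_bhs q Hq (r :: f :: g :: nil) (v :: w :: nil) _ Hxu).
  assert (H33 := is_series_bhs q Hq (r :: f :: g :: nil) (v :: w :: RtoC 0 :: nil) _ Hxu).
  split; [now apply qpoch_cvg|].
  split; [exact H32|].
  split; [exact H33|].
  split.
  - eapply is_series_ext; [intros n; symmetry; now apply T_term_inv_qpinf|].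
    exact (is_series_scal (K := C_AbsRing) (V := C_NormedModule) _ _ _ H32).
  - eapply is_series_ext; [intros n; symmetry; now apply E_term_qpinf|].
    exact (is_series_scal (K := C_AbsRing) (V := C_NormedModule) _ _ _ H33).
Qed.
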